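(* Let $n\ge 1$ and $h\ge 1$ be integers. Let $\mathcal{B}$ be the set of $(2n+1)\times(2n+1)$ integer matrices $B=(B_{i,j})_{i,j\in\{-n,\ldots,n\}}$ (rows and columns indexed by $-n,\ldots,n$) such that: $B_{i,i+1}=1$ for $i\in\{-n,\ldots,0\}$; $B_{i,i+1}=h$ for $i\in\{1,\ldots,n-1\}$; $B_{i,j}\in\{0,1,\ldots,h-1\}$ for $i\in\{1,\ldots,n\}$ and $j\in\{-n,\ldots,-1\}$ (these $n^2$ entries are arbitrary in this range); and all other entries of $B$ are $0$. Let $\mathcal{P}$ be the set of monic integer polynomials of the form $$t^{2n+1}-a_{2n-2}t^{2n-2}-a_{2n-3}t^{2n-3}-\cdots-a_1t-a_0$$ (so the coefficients of $t^{2n}$ and $t^{2n-1}$ are zero) where $a_{2n-k}\in\{0,1,\ldots,h^{k-1}-1\}$ for each $k\in\{2,\ldots,n+1\}$, and $a_{n-k}/h^{k-1}\in\{0,1,\ldots,h^{n-k+1}-1\}$ for each $k\in\{2,\ldots,n\}$. Then the map $B\mapsto\det(tI-B)$ is a bijection from $\mathcal{B}$ onto $\mathcal{P}$.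
   Context: $\det(tI-B)$ is the (monic) characteristic polynomial of $B$. *)

From HB Require Import structures.
From mathcomp Require Import all_boot all_order all_algebra.
Set Implicit Arguments. Unset Strict Implicit. Unset Printing Implicit Defensive.
Import Order.TTheory GRing.Theory Num.Theory.
Local Open Scope ring_scope.

(* Rows/columns indexed by {-n,...,n} are encoded by 'I_(2n+1):
   the ordinal i represents the integer index  i - n. *)
Definition idx (n : nat) (i : 'I_(n.*2.+1)) : int := (i : nat)%:Z - n%:Z.

Definition inB (n h : nat) (B : 'M[int]_(n.*2.+1)) : Prop :=
  forall i j : 'I_(n.*2.+1),
    let i' := idx i in let j' := idx j in
    if (- n%:Z <= i' <= 0) && (j' == i' + 1) then B i j = 1
    else if (1 <= i' <= n%:Z - 1) && (j' == i' + 1) then B i j = h%:Z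
    else if (1 <= i') && (j' <= -1) then (0 <= B i j /\ B i j < h%:Z)
    else B i j = 0.

(* The set \mathcal{P}: p = t^(2n+1) - sum_{m <= 2n-2} a_m t^m, so a_m = - p`_m. *)
Definition inP (n h : nat) (p : {poly int}) : Prop :=
  [/\ size p = n.*2.+2 /\ lead_coef p = 1, p`_(n.*2) = 0, p`_(n.*2 - 1) = 0,
      (forall k : nat, (2 <= k <= n.+1)%N ->
         0 <= - p`_(n.*2 - k) /\ - p`_(n.*2 - k) < h%:Z ^+ (k - 1)) &
      (forall k : nat, (2 <= k <= n)%N ->
         exists q : int, - p`_(n - k) = q * h%:Z ^+ (k - 1) /\
                         0 <= q /\ q < h%:Z ^+ (n - k + 1))].

Arguments inB : clear implicits.
Arguments inP : clear implicits.

From HB Require Import structures.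
From mathcomp Require Import all_boot all_order all_algebra.
From mathcomp Require Import zify ring.
Set Implicit Arguments. Unset Strict Implicit. Unset Printing Implicit Defensive.
Import Order.TTheory GRing.Theory Num.Theory.
Local Open Scope ring_scope.

(* Number rows and columns 0..2n, row r standing for the paper's index r - n.  The
   nonzero entries of B are the weights 1 (r <= n) or h (r > n) at (r, r+1) and the
   entries d r c of the lower-left block (r > n, c < n).  Put
   T_k = sum_(u < n, k <= j < n) d (n+1+u) j * h^u * t^(n-1-u+j-k) and let y be the row
   vector with y_r = t^(2n-r) - T_(r+1) for r <= n and y_r = h^(r-n-1) t^(2n-r) for r > n.
   Column by column, y (tI - B) = f e_0 with f = t^(2n+1) - T_0.  Multiplying by the
   adjugate and reading the last entry, where the cofactor is triangular with
   determinant h^(n-1) = y_(2n), gives det(tI - B) = f.  Hence for m <= 2n-2 the number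
   -[t^m] det(tI - B) is h^(n-1-m) (no factor when m >= n-1) times the number whose
   base-h digits are the block entries on one diagonal of the block, and the bijection
   follows from existence and uniqueness of base-h expansions. *)

Lemma sum_ord_pick (R : nmodType) L k m (g : nat -> R) :
  \sum_(j < L) (if (k + j == m)%N then g j else 0) =
  if (k <= m)%N && (m - k < L)%N then g (m - k)%N else 0.
Proof.
elim: L => [|L IH]; first by rewrite big_ord0; case: ifP => //; lia.
rewrite big_ord_recr /= IH; case: (boolP (k + L == m)) => E.
  rewrite ifF ?add0r; last by lia.
  by rewrite ifT; [congr g; lia | lia].
by rewrite addr0; case: ifP => H1; case: ifP => H2 //; lia.
Qed.

Lemma sum_ord_window (R : nmodType) L lo hi (G : nat -> R) :
  \sum_(u < L) (if (lo <= u < hi)%N then G u else 0) =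
  \sum_(v < minn L hi - lo) G (lo + v)%N.
Proof.
elim: L => [|L IH]; first by rewrite big_ord0 min0n sub0n big_ord0.
rewrite big_ord_recr /= IH; case: ifP => H.
  have -> : (minn L.+1 hi - lo = (minn L hi - lo).+1)%N by lia.
  by rewrite big_ord_recr /=; congr (_ + G _); lia.
have -> : (minn L.+1 hi - lo = minn L hi - lo)%N by lia.
by rewrite addr0.
Qed.

Lemma cramer_rule_row (R : comNzRingType) k (M : 'M[R]_k) (y : 'rV_k) f i0 j :
  y *m M = f *: delta_mx 0 i0 -> \det M * y 0 j = f * cofactor M j i0.
Proof.
move=> yM; have := congr1 (fun A => (A *m \adj M) 0 j) yM.
by rewrite /= -mulmxA mul_mx_adj mul_mx_scalar -scalemxAl -rowE !mxE.
Qed.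

Lemma size_lead_coef_of_coef (R : nzRingType) (p : {poly R}) N :
  (forall m, (N < m)%N -> p`_m = 0) -> p`_N = 1 -> size p = N.+1 /\ lead_coef p = 1.
Proof.
move=> p_hi p_N.
have size_le : (size p <= N.+1)%N by apply/leq_sizeP => j hj; apply: p_hi.
have size_gt : (N < size p)%N.
  rewrite ltnNge; apply/negP => /leq_sizeP /(_ N (leqnn N)).
  by rewrite p_N => /eqP; rewrite oner_eq0.
have size_p : size p = N.+1 by apply/eqP; rewrite eqn_leq size_le size_gt.
by rewrite lead_coefE size_p.
Qed.

Section BaseExpansion.
Variable h : nat.
Local Notation hz := h%:Z.

Lemma sum_digits_bound L (d : nat -> int) :
  (forall v, (v < L)%N -> 0 <= d v < hz) ->
  0 <= \sum_(v < L) d v * hz ^+ v < hz ^+ L.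
Proof.
elim: L d => [|L IH] d d_digit; first by rewrite big_ord0 expr0.
rewrite big_ord_recl /= expr0 mulr1.
under eq_bigr do rewrite exprS mulrCA.
rewrite -mulr_sumr exprS.
have /andP[d0 d1] := d_digit 0%N isT.
have /andP[s0 s1] := IH (fun v => d v.+1) (fun v hv => d_digit v.+1 hv).
set S := \sum_(i < L) _ in s0 s1 *; set X := hz ^+ L in s1 *.
have h0 : 0 <= hz by [].
apply/andP; split; nia.
Qed.

Lemma sum_digits_inj L (d e : nat -> int) :
  (forall v, (v < L)%N -> 0 <= d v < hz) ->
  (forall v, (v < L)%N -> 0 <= e v < hz) ->
  \sum_(v < L) d v * hz ^+ v = \sum_(v < L) e v * hz ^+ v ->
  forall v, (v < L)%N -> d v = e v.
Proof.
elim: L d e => [|L IH] d e d_digit e_digit //.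
rewrite !big_ord_recl /= !expr0 !mulr1.
under eq_bigr do rewrite exprS mulrCA.
under [X in _ = _ + X]eq_bigr do rewrite exprS mulrCA.
rewrite -!mulr_sumr.
have /andP[s0 s1] := sum_digits_bound (fun v hv => d_digit v.+1 hv).
have /andP[t0 t1] := sum_digits_bound (fun v hv => e_digit v.+1 hv).
have /andP[d0 d1] := d_digit 0%N isT.
have /andP[e0 e1] := e_digit 0%N isT.
set S := \sum_(i < L) d _ * _; set T := \sum_(i < L) e _ * _ => E.
have ST : S = T by case: (ltrgtP S T) => // lt; exfalso; nia.
have de0 : d 0%N = e 0%N by move: E; rewrite ST => /addIr.
have := IH _ _ (fun v hv => d_digit v.+1 hv) (fun v hv => e_digit v.+1 hv) ST.
by move=> de [|v] hv //; apply: de.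
Qed.

Hypothesis h_gt0 : (0 < h)%N.

Lemma sum_nat_digits L q : (q < h ^ L)%N ->
  \sum_(v < L) ((q %/ h ^ v) %% h)%:Z * hz ^+ v = q%:Z.
Proof.
elim: L q => [|L IH] q hq.
  by rewrite big_ord0; move: hq; rewrite expn0 ltnS leqn0 => /eqP->.
rewrite big_ord_recl /= expn0 divn1 expr0 mulr1.
under eq_bigr do rewrite expnS divnMA exprS mulrCA.
rewrite -mulr_sumr IH; last by rewrite ltn_divLR ?expn_gt0 ?h_gt0 // mulnC -expnS.
by rewrite {3}(divn_eq q h) PoszD PoszM addrC mulrC.
Qed.

Lemma sum_digits_scaled k L q : (q < h ^ L)%N ->
  hz ^+ k * \sum_(v < L) ((q * h ^ k %/ h ^ (k + v)) %% h)%:Z * hz ^+ v =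
  (q * h ^ k)%:Z.
Proof.
move=> hq; under eq_bigr do rewrite expnD divnMA mulnK ?expn_gt0 ?h_gt0 //.
by rewrite sum_nat_digits // PoszM -!natz natrX mulrC.
Qed.

End BaseExpansion.

Section CharPoly.
Variables (n h : nat) (d : nat -> nat -> int).
Local Notation N := n.*2.+1.
Local Notation hz := h%:Z.

Definition superdiag (r : nat) : int := if (r <= n)%N then 1 else hz.

Definition shape_mx : 'M[int]_N := \matrix_(i, j)
  ((if j == i.+1 :> nat then superdiag i else 0) +
   (if (n < i)%N && (j < n)%N then d i j else 0)).

Definition block_tail (r : nat) : {poly int} :=
  \sum_(u < n) \sum_(j < n | (r <= j)%N)
     (d (n.+1 + u) j * hz ^+ u)%:P * 'X^(n - u.+1 + (j - r)).

Definition lvec (r : nat) : {poly int} :=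
  if (r <= n)%N then 'X^(n.*2 - r) - block_tail r.+1
  else (hz ^+ (r - n.+1))%:P * 'X^(n.*2 - r).

Definition shape_char_poly : {poly int} := 'X^N - block_tail 0.

Local Notation block_col c :=
  (\sum_(u < n) (d (n.+1 + u) c * hz ^+ u)%:P * 'X^(n - u.+1)).

Lemma block_tail_eq0 r : (n <= r)%N -> block_tail r = 0.
Proof.
move=> hr; rewrite /block_tail big1 // => u _; rewrite big1 // => j hj.
by have := ltn_ord j; lia.
Qed.

Lemma block_tailS r : (r < n)%N -> block_tail r = 'X * block_tail r.+1 + block_col r.
Proof.
move=> hr; rewrite /block_tail mulr_sumr -big_split; apply: eq_bigr => u _ /=.
rewrite (bigD1 (Ordinal hr)) //= subnn addn0 addrC; congr (_ + _).
rewrite mulr_sumr; apply: eq_big => j.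
  by rewrite -val_eqE /=; apply/idP/idP; lia.
move=> hj; rewrite mulrCA -exprS; congr (_ * 'X^_).
by move: hj; rewrite -val_eqE /=; lia.
Qed.

Lemma lvec_block u : (u < n)%N ->
  lvec (n.+1 + u) = (hz ^+ u)%:P * 'X^(n - u.+1).
Proof.
move=> hu; rewrite /lvec ifF; last by lia.
by rewrite addKn (_ : n.*2 - (n.+1 + u) = n - u.+1)%N //; lia.
Qed.

Lemma sum_lvec_shape_mx (c : 'I_N) :
  \sum_(r < N) lvec r * (shape_mx r c)%:P =
  (if (0 < c)%N then lvec c.-1 * (superdiag c.-1)%:P else 0) +
  (if (c < n)%N then block_col c else 0).
Proof.
under eq_bigr do rewrite mxE polyCD mulrDr.
rewrite big_split /=; congr (_ + _).
  rewrite (eq_bigr (fun r : 'I_N =>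
    if (1 + r == c)%N then lvec r * (superdiag r)%:P else 0)).
    rewrite (sum_ord_pick _ _ _ (fun r => lvec r * (superdiag r)%:P)) subn1.
    by case: c => [[|c]] //= hc; rewrite ifT //; lia.
  by move=> r _; rewrite eq_sym add1n; case: eqP; rewrite ?mulr0.
rewrite (eq_bigr (fun r : 'I_N => if (n.+1 <= r < N)%N then
    (if (c < n)%N then lvec r * (d r c)%:P else 0) else 0)); last first.
  by move=> r _; rewrite ltn_ord andbT; case: (n < r)%N; case: (c < n)%N; rewrite ?mulr0.
rewrite (sum_ord_window _ _ _ (fun r => if (c < n)%N then lvec r * (d r c)%:P else 0)).
rewrite minnn (_ : N - n.+1 = n)%N; last by lia.
case: ifP => _; last by rewrite big1.
by apply: eq_bigr => u _; rewrite lvec_block // polyCM; ring.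
Qed.

Lemma prod_superdiag k : \prod_(r < k) superdiag r = hz ^+ (k - n.+1).
Proof.
elim: k => [|k IH]; first by rewrite big_ord0.
rewrite big_ord_recr /= IH /superdiag; case: ifP => hk.
  by rewrite mulr1; congr (_ ^+ _); lia.
by rewrite -exprSr; congr (_ ^+ _); lia.
Qed.

Hypothesis n_gt0 : (0 < n)%N.

Lemma lvec_rec c : (c < N)%N ->
  'X * lvec c =
    (if c == 0%N then shape_char_poly else lvec c.-1 * (superdiag c.-1)%:P) +
    (if (c < n)%N then block_col c else 0).
Proof.
move=> hc; case: (ltngtP c n) => [c_lt | c_gt | ->].
- case: c hc c_lt => [|c] hc c_lt /=.
    by rewrite /shape_char_poly /lvec leq0n (block_tailS n_gt0) exprS subn0; ring.
  rewrite /superdiag /lvec ifT; last by lia.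
  rewrite ifT; last by lia.
  rewrite ifT; last by lia.
  rewrite (block_tailS c_lt) (_ : n.*2 - c = (n.*2 - c.+1).+1)%N; last by lia.
  by rewrite exprS; ring.
- rewrite ifF; last by lia.
  rewrite addr0 /superdiag /lvec ifF; last by lia.
  case: (boolP (c == n.+1)) => [/eqP -> | c_ne] /=.
    rewrite leqnn (block_tail_eq0 (leqnSn n)) subnn subr0 mulr1 expr0 mul1r.
    by rewrite (_ : n.*2 - n = (n.*2 - n.+1).+1)%N ?exprS //; lia.
  have -> : (c.-1 <= n)%N = false by lia.
  rewrite (_ : c - n.+1 = (c.-1 - n.+1).+1)%N; last by lia.
  rewrite (_ : n.*2 - c.-1 = (n.*2 - c).+1)%N; last by lia.
  by rewrite !exprS polyCM; ring.
- rewrite addr0 ifF; last by lia.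
  rewrite /superdiag /lvec leqnn leq_pred !block_tail_eq0 //; try lia.
  rewrite (_ : n.*2 - n.-1 = (n.*2 - n).+1)%N; last by lia.
  by rewrite exprS; ring.
Qed.

Lemma lvec_mul_char_poly_mx :
  \row_(r < N) lvec r *m char_poly_mx shape_mx = shape_char_poly *: delta_mx 0 0.
Proof.
apply/rowP => c; rewrite /char_poly_mx mulmxBr mul_mx_scalar !mxE.
rewrite (eq_bigr (fun r : 'I_N => lvec r * (shape_mx r c)%:P)); last first.
  by move=> r _; rewrite !mxE.
rewrite sum_lvec_shape_mx (lvec_rec (ltn_ord c)).
case: c => [[|c] hc]; rewrite -val_eqE /=; first by rewrite add0r addrK mulr1.
by rewrite subrr mulr0.
Qed.

Lemma cofactor_char_poly_shape_mx :
  cofactor (char_poly_mx shape_mx) ord_max 0 = (hz ^+ n.-1)%:P.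
Proof.
set M := char_poly_mx shape_mx.
have minorE (i j : 'I_N.-1) : row' ord_max (col' 0 M) i j =
    'X *+ (i == j.+1 :> nat) - ((if j.+1 == i.+1 :> nat then superdiag i else 0) +
       (if (n < i)%N && (j.+1 < n)%N then d i j.+1 else 0))%:P.
  rewrite !mxE -val_eqE /= /bump leq0n add1n.
  by rewrite leqNgt ltn_ord add0n.
rewrite /cofactor det_trig; last first.
  apply/is_trig_mxP => i j lt_ij; rewrite minorE.
  have -> : (i == j.+1 :> nat) = false by lia.
  rewrite ifF; last by lia.
  by rewrite ifF ?add0r ?polyC0 ?mulr0n ?oppr0 //; lia.
rewrite (eq_bigr (fun i : 'I_N.-1 => - (superdiag i)%:P)); last first.
  move=> i _; rewrite minorE eqxx (_ : (i == i.+1 :> nat) = false); last by lia.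
  by rewrite ifF ?addr0 ?sub0r //; lia.
rewrite prodrN -rmorph_prod prod_superdiag card_ord /= addn0 mulrA -exprD addnn.
rewrite -mul2n exprM sqrrN !expr1n mul1r; congr (_ ^+ _)%:P; lia.
Qed.

Hypothesis h_gt0 : (0 < h)%N.

Lemma char_poly_shape_mx : char_poly shape_mx = shape_char_poly.
Proof.
have := cramer_rule_row ord_max lvec_mul_char_poly_mx.
rewrite cofactor_char_poly_shape_mx mxE /lvec /= ifF; last by lia.
rewrite subnn expr0 mulr1 (_ : n.*2 - n.+1 = n.-1)%N; last by lia.
by apply: mulIf; rewrite polyC_eq0 expf_neq0 //; lia.
Qed.

End CharPoly.

Definition nat_entry n (B : 'M[int]_(n.*2.+1)) (r c : nat) : int :=
  B (inord r) (inord c).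

Definition block_in_range n h (d : nat -> nat -> int) :=
  forall r c, (n < r < n.*2.+1)%N -> (c < n)%N -> 0 <= d r c < h%:Z.

Lemma inBE n h (B : 'M[int]_(n.*2.+1)) : inB n h B <->
  forall i j : 'I_(n.*2.+1),
    if (i <= n)%N && (j == i.+1 :> nat) then B i j = 1
    else if (n < i < n.*2)%N && (j == i.+1 :> nat) then B i j = h%:Z
    else if (n < i)%N && (j < n)%N then 0 <= B i j /\ B i j < h%:Z
    else B i j = 0.
Proof.
have condE (i j : 'I_(n.*2.+1)) : [/\
    (- n%:Z <= idx i <= 0) && (idx j == idx i + 1) =
      (i <= n)%N && (j == i.+1 :> nat),
    (1 <= idx i <= n%:Z - 1) && (idx j == idx i + 1) =
      (n < i < n.*2)%N && (j == i.+1 :> nat)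
  & (1 <= idx i) && (idx j <= -1) = (n < i)%N && (j < n)%N].
  by rewrite /idx; split; lia.
by split=> HB i j; have := HB i j; case: (condE i j) => /= -> -> ->.
Qed.

Lemma shape_mxE n h d (i j : 'I_(n.*2.+1)) : shape_mx n h d i j =
  if (i <= n)%N && (j == i.+1 :> nat) then 1
  else if (n < i < n.*2)%N && (j == i.+1 :> nat) then h%:Z
  else if (n < i)%N && (j < n)%N then d i j else 0.
Proof.
rewrite mxE /superdiag.
case: (boolP (j == i.+1 :> nat)) => /= E; last by rewrite !andbF add0r.
rewrite !andbT (_ : (n < i)%N && (j < n)%N = false) ?addr0; last by lia.
have := ltn_ord j; case: (leqP i n) => // lt_ni lt_j; rewrite ifT //; lia.
Qed.

Lemma inB_shape_mx n h (B : 'M[int]_(n.*2.+1)) :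
  inB n h B -> B = shape_mx n h (nat_entry B).
Proof.
move/inBE=> HB; apply/matrixP => i j; rewrite shape_mxE /nat_entry !inord_val.
by move: (HB i j); case: ifP => // _; case: ifP => // _; case: ifP.
Qed.

Lemma inB_block_in_range n h (B : 'M[int]_(n.*2.+1)) :
  inB n h B -> block_in_range n h (nat_entry B).
Proof.
move/inBE=> HB r c hr hc; have := HB (inord r) (inord c).
rewrite /nat_entry !inordK; try lia.
rewrite ifF; last by lia.
rewrite ifF; last by lia.
by rewrite ifT; [case=> -> -> | lia].
Qed.

Lemma shape_mx_inB n h d : block_in_range n h d -> inB n h (shape_mx n h d).
Proof.
move=> dR; apply/inBE => i j; rewrite shape_mxE.
case: ifP => [-> // | ->]; case: ifP => [-> // | ->].
case: ifP => [C | -> //]; rewrite C; case/andP: C => lt_ni lt_jn.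
by apply/andP; apply: dR; rewrite ?lt_ni ?ltn_ord.
Qed.

Lemma eq_shape_mx n h d1 d2 :
  (forall r c, (n < r < n.*2.+1)%N -> (c < n)%N -> d1 r c = d2 r c) ->
  shape_mx n h d1 = shape_mx n h d2.
Proof.
move=> E; apply/matrixP => i j; rewrite !mxE.
case: (boolP ((n < i)%N && (j < n)%N)) => // /andP[lt_ni lt_jn].
by rewrite E // lt_ni ltn_ord.
Qed.

(* For m <= 2n-2 the paper's a_m = -[t^m] is h^(dshift n m) times the base-h number
   with ndigits n m digits [digit n d m v] = d (n+1+u) (m+u+1-n), u = dshift n m + v. *)
Definition dshift n m := (n - m.+1)%N.
Definition ndigits n m := (minn n (n.*2 - m.+1) - dshift n m)%N.
Definition digit n (d : nat -> nat -> int) m v :=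
  d (n.+1 + (dshift n m + v))%N (m - (n - (dshift n m + v).+1))%N.

Lemma coef_shape_char_poly n h d m : (shape_char_poly n h d)`_m =
  (m == n.*2.+1)%:R -
  h%:Z ^+ dshift n m * \sum_(v < ndigits n m) digit n d m v * h%:Z ^+ v.
Proof.
rewrite /shape_char_poly /block_tail coefB coefXn coef_sum; congr (_ - _).
pose G u := d (n.+1 + u)%N (m - (n - u.+1))%N * h%:Z ^+ u.
rewrite (eq_bigr (fun u : 'I_n =>
  if (dshift n m <= u < n.*2 - m.+1)%N then G u else 0)).
  by rewrite sum_ord_window mulr_sumr; apply: eq_bigr => v _; rewrite /G exprD mulrCA.
move=> u _; rewrite coef_sum big_mkcond /=.
rewrite (eq_bigr (fun j : 'I_n =>
  if (n - u.+1 + j == m)%N then d (n.+1 + u) j * h%:Z ^+ u else 0)).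
  rewrite (sum_ord_pick _ _ _ (fun j => d (n.+1 + u) j * h%:Z ^+ u)).
  by congr (if _ then _ else _); have := ltn_ord u; rewrite /dshift; lia.
by move=> j _; rewrite coefCM coefXn subn0 mulr_natr mulrb eq_sym.
Qed.

Lemma coef_shape_char_poly_high n h d m :
  (n.*2 - 2 < m)%N -> (shape_char_poly n h d)`_m = (m == n.*2.+1)%:R.
Proof.
move=> hm; rewrite coef_shape_char_poly (_ : ndigits n m = 0%N).
  by rewrite big_ord0 mulr0 subr0.
by rewrite /ndigits /dshift; lia.
Qed.

Lemma coef_shape_char_poly_low n h d m : (m <= n.*2 - 2)%N ->
  - (shape_char_poly n h d)`_m =
  h%:Z ^+ dshift n m * \sum_(v < ndigits n m) digit n d m v * h%:Z ^+ v.
Proof.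
move=> hm; rewrite coef_shape_char_poly (_ : (m == n.*2.+1) = false) ?sub0r ?opprK //.
by lia.
Qed.

Lemma digit_in_range n h d m v :
  block_in_range n h d -> (v < ndigits n m)%N -> 0 <= digit n d m v < h%:Z.
Proof. by move=> dR hv; apply: dR; move: hv; rewrite /ndigits /dshift; lia. Qed.

Lemma inPE n h p : (0 < n)%N -> inP n h p <->
  (forall m, (n.*2 - 2 < m)%N -> p`_m = (m == n.*2.+1)%:R) /\
  (forall m, (m <= n.*2 - 2)%N ->
     exists2 q : int, - p`_m = q * h%:Z ^+ dshift n m & 0 <= q < h%:Z ^+ ndigits n m).
Proof.
move=> n_gt0; split.
- case=> [[size_p lead_p] p_2n p_2n1 p_hi p_lo]; split=> m hm.
  + case: (ltngtP m n.*2.+1) => [lt_mN | gt_mN | ->].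
    * by have [->|->] : m = n.*2 \/ m = (n.*2 - 1)%N by lia.
    * by rewrite nth_default ?size_p.
    * by rewrite -lead_p lead_coefE size_p.
  + case: (leqP n.-1 m) => hm'.
      have /p_hi[q0 q_lt] : (2 <= n.*2 - m <= n.+1)%N by lia.
      rewrite subKn in q0 q_lt; last by lia.
      exists (- p`_m); first by rewrite /dshift (_ : n - m.+1 = 0)%N ?mulr1 //; lia.
      by rewrite q0 (_ : ndigits n m = n.*2 - m - 1)%N // /ndigits /dshift; lia.
    have /p_lo[q [pq [q0 q_lt]]] : (2 <= n - m <= n)%N by lia.
    rewrite subKn in pq; last by lia.
    exists q; first by rewrite pq /dshift (_ : n - m.+1 = n - m - 1)%N //; lia.
    by rewrite q0 (_ : ndigits n m = n - (n - m) + 1)%N // /ndigits /dshift; lia.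
- case=> p_hi p_lo; split.
  + by apply: size_lead_coef_of_coef => [m hm|]; rewrite p_hi ?eqxx //; lia.
  + by rewrite p_hi //; lia.
  + by rewrite p_hi //; lia.
  + move=> k hk; have [q pq /andP[q0 q_lt]] := p_lo (n.*2 - k)%N ltac:(lia).
    rewrite pq (_ : dshift n _ = 0)%N ?mulr1; last by rewrite /dshift; lia.
    by rewrite q0 (_ : k - 1 = ndigits n (n.*2 - k))%N // /ndigits /dshift; lia.
  + move=> k hk; have [q pq /andP[q0 q_lt]] := p_lo (n - k)%N ltac:(lia).
    exists q; rewrite pq (_ : dshift n _ = k - 1)%N; last by rewrite /dshift; lia.
    by rewrite (_ : n - k + 1 = ndigits n (n - k))%N // /ndigits /dshift; lia.
Qed.

Lemma shape_char_poly_inP n h d :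
  (0 < n)%N -> block_in_range n h d -> inP n h (shape_char_poly n h d).
Proof.
move=> n_gt0 dR; apply/inPE => //; split=> m hm.
  exact: coef_shape_char_poly_high.
rewrite coef_shape_char_poly_low //; eexists; first exact: mulrC.
exact: sum_digits_bound (fun v => @digit_in_range n h d m v dR).
Qed.

Lemma digit_of_block n d r c : (n < r < n.*2.+1)%N -> (c < n)%N ->
  (r - n.+1 - dshift n (n.*2 - r + c) < ndigits n (n.*2 - r + c))%N /\
  digit n d (n.*2 - r + c) (r - n.+1 - dshift n (n.*2 - r + c)) = d r c.
Proof.
move=> hr hc; split; first by rewrite /ndigits /dshift; lia.
by rewrite /digit /dshift; congr d; lia.
Qed.

Lemma shape_char_poly_inj n h d1 d2 : (0 < h)%N ->
  block_in_range n h d1 -> block_in_range n h d2 ->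
  shape_char_poly n h d1 = shape_char_poly n h d2 ->
  forall r c, (n < r < n.*2.+1)%N -> (c < n)%N -> d1 r c = d2 r c.
Proof.
move=> h_gt0 d1R d2R E r c hr hc.
have [v_lt <-] := digit_of_block d1 hr hc; have [_ <-] := digit_of_block d2 hr hc.
set m := (n.*2 - r + c)%N in v_lt *; set v := (r - n.+1 - _)%N in v_lt *.
have m_le : (m <= n.*2 - 2)%N by rewrite /m; lia.
have hm_neq0 : h%:Z ^+ dshift n m != 0 by rewrite expf_neq0 //; lia.
have : - (shape_char_poly n h d1)`_m = - (shape_char_poly n h d2)`_m by rewrite E.
rewrite !coef_shape_char_poly_low // => /(mulfI hm_neq0).
by move/(sum_digits_inj (fun v => @digit_in_range n h d1 m v d1R)
                        (fun v => @digit_in_range n h d2 m v d2R)); apply.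
Qed.

Lemma shape_char_poly_surj n h p : (0 < n)%N -> (0 < h)%N -> inP n h p ->
  exists2 d, block_in_range n h d & shape_char_poly n h d = p.
Proof.
move=> n_gt0 h_gt0 /inPE[] // p_hi p_lo.
pose d r c := ((absz p`_(n.*2 - r + c) %/ h ^ (r - n.+1)) %% h)%:Z.
exists d => [r c _ _|]; first by rewrite /d ltz_nat ltn_pmod.
apply/polyP => m.
case: (leqP m (n.*2 - 2)) => hm; last by rewrite coef_shape_char_poly_high ?p_hi.
have [q pq /andP[q0 q_lt]] := p_lo m hm.
have abs_pm : absz p`_m = (absz q * h ^ dshift n m)%N.
  by rewrite -abszN pq abszM abszX absz_nat.
apply: oppr_inj; rewrite coef_shape_char_poly_low //.
rewrite (eq_bigr (fun v : 'I_(ndigits n m) =>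
    ((absz q * h ^ dshift n m %/ h ^ (dshift n m + v)) %% h)%N%:Z * h%:Z ^+ v)); last first.
  move=> v _; rewrite /digit /d addKn -abs_pm.
  by rewrite (_ : n.*2 - _ + _ = m)%N //; have := ltn_ord v; rewrite /ndigits /dshift; lia.
rewrite sum_digits_scaled //; last by rewrite -ltz_nat gez0_abs // -natz natrX natz.
by rewrite -abs_pm -abszN gez0_abs // pq mulr_ge0 ?exprn_ge0.
Qed.

Theorem mainTheorem4 (n h : nat) (hn : (1 <= n)%N) (hh : (1 <= h)%N) :
  [/\ (forall B : 'M[int]_(n.*2.+1), inB n h B -> inP n h (char_poly B)),
      (forall B1 B2 : 'M[int]_(n.*2.+1), inB n h B1 -> inB n h B2 ->
         char_poly B1 = char_poly B2 -> B1 = B2) &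
      (forall p : {poly int}, inP n h p ->
         exists B : 'M[int]_(n.*2.+1), inB n h B /\ char_poly B = p)].
Proof.
split.
- move=> B HB; rewrite (inB_shape_mx HB) char_poly_shape_mx //.
  exact: shape_char_poly_inP (inB_block_in_range HB).
- move=> B1 B2 HB1 HB2.
  rewrite (inB_shape_mx HB1) (inB_shape_mx HB2) !char_poly_shape_mx // => E.
  apply: eq_shape_mx.
  exact: shape_char_poly_inj (inB_block_in_range HB1) (inB_block_in_range HB2) E.
- move=> p /(shape_char_poly_surj hn hh)[d dR <-].
  by exists (shape_mx n h d); split; [exact: shape_mx_inB | exact: char_poly_shape_mx].
Qed.
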